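(* Let $\delta_j,\delta_k$ be coprime integers with $1<\delta_j<\delta_k$, let $r=\delta_k\bmod\delta_j$ and let $f\colon \mathcal B(\delta_j,r)\to\mathcal B(\delta_k,\delta_j)$, $f(x',y')=(y',\,x'-y'\lfloor \delta_k/\delta_j\rfloor)$. Then the irreducible elements of $\mathcal B(\delta_k,\delta_j)\cap f(\mathcal B(\delta_j,r))$ are exactly the images $f(\mathbf x')$ of the irreducible elements $\mathbf x'$ of $\mathcal B(\delta_j,r)$.
   Context: For coprime positive integers $p,q$ and $i\in\{1,\ldots,\max\{p,q\}\}$, the $\lambda$-B\'ezout couple $\boldsymbol\lambda_i$ of $i$ for $(p,q)$ is the unique $(x,y)\in\mathbb Z^2$ with $xp+yq=i$ and $0<y\le p$, and the $\mu$-B\'ezout couple $\boldsymbol\mu_i$ of $i$ for $(p,q)$ is the unique $(x,y)\in\mathbb Z^2$ with $xp+yq=i$ and $0<x\le q$. $\mathcal B(p,q)$ denotes the set of all $\lambda$- and $\mu$-B\'ezout couples for $(p,q)$. $\boldsymbol\lambda_i$ is irreducible if there are no $j,k\in\{1,\ldots,\max\{p,q\}\}$ with $\boldsymbol\lambda_i=\boldsymbol\lambda_j+\boldsymbol\lambda_k$; likewise $\boldsymbol\mu_i$ is irreducible if there are no such $j,k$ with $\boldsymbol\mu_i=\boldsymbol\mu_j+\boldsymbol\mu_k$. *)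

From Stdlib Require Import ZArith Lia.
Open Scope Z_scope.

Definition is_lambda_couple (p q i : Z) (v : Z * Z) : Prop :=
  fst v * p + snd v * q = i /\ 0 < snd v <= p.

Definition is_mu_couple (p q i : Z) (v : Z * Z) : Prop :=
  fst v * p + snd v * q = i /\ 0 < fst v <= q.

Definition lambda_couple (p q : Z) (v : Z * Z) : Prop :=
  exists i, 1 <= i <= Z.max p q /\ is_lambda_couple p q i v.

Definition mu_couple (p q : Z) (v : Z * Z) : Prop :=
  exists i, 1 <= i <= Z.max p q /\ is_mu_couple p q i v.

Definition Bez (p q : Z) (v : Z * Z) : Prop :=
  lambda_couple p q v \/ mu_couple p q v.

Definition addZ2 (u w : Z * Z) : Z * Z := (fst u + fst w, snd u + snd w).

Definition irreducible_Bez (p q : Z) (v : Z * Z) : Prop :=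
  (lambda_couple p q v /\
     ~ (exists u w, lambda_couple p q u /\ lambda_couple p q w /\ v = addZ2 u w))
  \/
  (mu_couple p q v /\
     ~ (exists u w, mu_couple p q u /\ mu_couple p q w /\ v = addZ2 u w)).

Definition fmap (dj dk : Z) (v : Z * Z) : Z * Z :=
  (snd v, fst v - snd v * (dk / dj)).

From Stdlib Require Import ZArith Lia.
Open Scope Z_scope.

(* Write p = q Q + r.  The map f : (x, y) |-> (y, x - y Q) is one step of the
   Euclidean algorithm: it preserves the index, x q + y r = x' p + y' q, and
   sends lambda-couples of (q, r) to mu-couples of (p, q) and vice versa.  It
   is additive with additive inverse (x, y) |-> (y + x Q, x), and this inverse
   sends couples of (p, q) of index at most q back to couples of (q, r).
   Since indices are at least 1 and add up, both summands of a decomposition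
   of an image f v (whose index is at most q) have index at most q, so they
   pull back; hence f preserves and reflects decomposability.  Lambda- and
   mu-couples never coincide, so irreducibility is transferred as well. *)

Definition bezout_index (p q : Z) (v : Z * Z) : Z := fst v * p + snd v * q.

Definition bezout_shift (Q : Z) (v : Z * Z) : Z * Z := (snd v, fst v - snd v * Q).

Definition bezout_unshift (Q : Z) (v : Z * Z) : Z * Z := (snd v + fst v * Q, fst v).

Definition decomposable (C : Z * Z -> Prop) (v : Z * Z) : Prop :=
  exists u w, C u /\ C w /\ v = addZ2 u w.

Lemma bezout_shiftK Q v : bezout_unshift Q (bezout_shift Q v) = v.
Proof. destruct v; unfold bezout_unshift, bezout_shift; simpl; f_equal; ring. Qed.

Lemma bezout_shift_add Q u w :
  bezout_shift Q (addZ2 u w) = addZ2 (bezout_shift Q u) (bezout_shift Q w).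
Proof. destruct u, w; unfold bezout_shift, addZ2; simpl; f_equal; ring. Qed.

Lemma bezout_unshift_add Q u w :
  bezout_unshift Q (addZ2 u w) = addZ2 (bezout_unshift Q u) (bezout_unshift Q w).
Proof. destruct u, w; unfold bezout_unshift, addZ2; simpl; f_equal; ring. Qed.

Lemma bezout_index_add p q u w :
  bezout_index p q (addZ2 u w) = bezout_index p q u + bezout_index p q w.
Proof. destruct u, w; unfold bezout_index, addZ2; simpl; ring. Qed.

Lemma lambda_couple_index p q v :
  lambda_couple p q v -> 1 <= bezout_index p q v <= Z.max p q.
Proof. intros [i [Hi [Hv _]]]; unfold bezout_index; lia. Qed.

Lemma mu_couple_index p q v :
  mu_couple p q v -> 1 <= bezout_index p q v <= Z.max p q.
Proof. intros [i [Hi [Hv _]]]; unfold bezout_index; lia. Qed.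

Lemma lambda_mu_couple_disjoint p q v :
  0 < p -> 0 < q -> lambda_couple p q v -> mu_couple p q v -> False.
Proof.
  destruct v as [x y]; intros Hp Hq [i [Hi [Hv Hy]]] [j [Hj [Hv' Hx]]]; simpl in *.
  nia.
Qed.

Lemma decomposable_transfer (F G : Z * Z -> Z * Z) (J : Z * Z -> Z)
    (C D : Z * Z -> Prop) (q : Z) v :
  (forall v, G (F v) = v) ->
  (forall u w, F (addZ2 u w) = addZ2 (F u) (F w)) ->
  (forall u w, G (addZ2 u w) = addZ2 (G u) (G w)) ->
  (forall u w, J (addZ2 u w) = J u + J w) ->
  (forall v, C v -> D (F v)) ->
  (forall u, D u -> J u <= q -> C (G u)) ->
  (forall u, D u -> 1 <= J u) ->
  J (F v) <= q ->
  decomposable D (F v) <-> decomposable C v.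
Proof.
  intros FK F_add G_add J_add CD DC D_pos Jv; split.
  - intros [u [w [Du [Dw Ev]]]].
    assert (Juw : J (F v) = J u + J w) by (rewrite Ev; apply J_add).
    pose proof (D_pos u Du); pose proof (D_pos w Dw).
    exists (G u), (G w); split; [|split].
    + apply DC; [assumption | lia].
    + apply DC; [assumption | lia].
    + rewrite <- G_add, <- Ev, FK; reflexivity.
  - intros [u [w [Cu [Cw ->]]]].
    exists (F u), (F w); repeat split; auto.
Qed.

Section EuclideanStep.

Variables p q r Q : Z.
Hypothesis p_eq : p = q * Q + r.
Hypothesis r_bounds : 1 <= r < q.
Hypothesis Q_ge0 : 0 <= Q.

Lemma bezout_index_shift v : bezout_index p q (bezout_shift Q v) = bezout_index q r v.
Proof. destruct v; unfold bezout_index, bezout_shift; simpl; subst p; ring. Qed.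

Lemma lambda_couple_shift v : lambda_couple q r v -> mu_couple p q (bezout_shift Q v).
Proof.
  destruct v as [x y]; intros [i [Hi [Hv Hy]]]; simpl in *.
  exists i; unfold is_mu_couple, bezout_shift; simpl.
  split; [nia|]; split; [subst p i; ring | lia].
Qed.

Lemma mu_couple_shift v : mu_couple q r v -> lambda_couple p q (bezout_shift Q v).
Proof.
  destruct v as [x y]; intros [i [Hi [Hv Hx]]]; simpl in *.
  exists i; unfold is_lambda_couple, bezout_shift; simpl.
  assert (y_le0 : y <= 0) by nia.
  assert (y_gt : - q < y) by nia.
  split; [nia|]; split; [subst p i; ring | nia].
Qed.

Lemma mu_couple_unshift u :
  mu_couple p q u -> bezout_index p q u <= q -> lambda_couple q r (bezout_unshift Q u).
Proof.
  destruct u as [a b]; intros [i [Hi [Hu Ha]]] Hle; unfold bezout_index in Hle; simpl in *.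
  exists i; unfold is_lambda_couple, bezout_unshift; simpl.
  split; [lia|]; split; [subst p i; ring | lia].
Qed.

Lemma lambda_couple_unshift u :
  lambda_couple p q u -> bezout_index p q u <= q -> mu_couple q r (bezout_unshift Q u).
Proof.
  destruct u as [a b]; intros [i [Hi [Hu Hb]]] Hle; unfold bezout_index in Hle; simpl in *.
  exists i; unfold is_mu_couple, bezout_unshift; simpl.
  assert (a_le0 : a <= 0) by nia.
  assert (a_gt : - q < a) by nia.
  assert (Hk : q * (b + a * Q) = i - a * r) by (subst p; nia).
  split; [lia|]; split; [subst p i; ring | nia].
Qed.

Lemma Bez_shift v : Bez q r v -> Bez p q (bezout_shift Q v).
Proof.
  intros [Hv | Hv]; [right; apply lambda_couple_shift | left; apply mu_couple_shift];
    assumption.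
Qed.

Lemma bezout_index_shift_le v : Bez q r v -> bezout_index p q (bezout_shift Q v) <= q.
Proof.
  rewrite bezout_index_shift.
  intros [Hv | Hv]; [apply lambda_couple_index in Hv | apply mu_couple_index in Hv]; lia.
Qed.

Lemma decomposable_lambda_shift v :
  lambda_couple q r v ->
  decomposable (mu_couple p q) (bezout_shift Q v) <-> decomposable (lambda_couple q r) v.
Proof.
  intro Hv; apply decomposable_transfer with (G := bezout_unshift Q) (J := bezout_index p q) (q := q).
  - apply bezout_shiftK.
  - apply bezout_shift_add.
  - apply bezout_unshift_add.
  - apply bezout_index_add.
  - apply lambda_couple_shift.
  - apply mu_couple_unshift.
  - intros u Hu; apply mu_couple_index in Hu; lia.
  - apply bezout_index_shift_le; left; exact Hv.
Qed.

Lemma decomposable_mu_shift v :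
  mu_couple q r v ->
  decomposable (lambda_couple p q) (bezout_shift Q v) <-> decomposable (mu_couple q r) v.
Proof.
  intro Hv; apply decomposable_transfer with (G := bezout_unshift Q) (J := bezout_index p q) (q := q).
  - apply bezout_shiftK.
  - apply bezout_shift_add.
  - apply bezout_unshift_add.
  - apply bezout_index_add.
  - apply mu_couple_shift.
  - apply lambda_couple_unshift.
  - intros u Hu; apply lambda_couple_index in Hu; lia.
  - apply bezout_index_shift_le; right; exact Hv.
Qed.

Lemma irreducible_Bez_shift v :
  Bez q r v -> irreducible_Bez p q (bezout_shift Q v) <-> irreducible_Bez q r v.
Proof.
  assert (p_pos : 0 < p) by nia.
  assert (q_pos : 0 < q) by lia.
  assert (r_pos : 0 < r) by lia.
  intros [Hv | Hv].
  - pose proof (lambda_couple_shift v Hv) as Hfv.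
    pose proof (decomposable_lambda_shift v Hv) as Hdec.
    split; [intros [[Hl _] | [_ Hn]] | intros [[_ Hn] | [Hm _]]].
    + exfalso; exact (lambda_mu_couple_disjoint p q _ p_pos q_pos Hl Hfv).
    + left; split; [exact Hv | intro Hd; exact (Hn (proj2 Hdec Hd))].
    + right; split; [exact Hfv | intro Hd; exact (Hn (proj1 Hdec Hd))].
    + exfalso; exact (lambda_mu_couple_disjoint q r _ q_pos r_pos Hv Hm).
  - pose proof (mu_couple_shift v Hv) as Hfv.
    pose proof (decomposable_mu_shift v Hv) as Hdec.
    split; [intros [[_ Hn] | [Hm _]] | intros [[Hl _] | [_ Hn]]].
    + right; split; [exact Hv | intro Hd; exact (Hn (proj2 Hdec Hd))].
    + exfalso; exact (lambda_mu_couple_disjoint p q _ p_pos q_pos Hfv Hm).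
    + exfalso; exact (lambda_mu_couple_disjoint q r _ q_pos r_pos Hl Hv).
    + left; split; [exact Hfv | intro Hd; exact (Hn (proj1 Hdec Hd))].
Qed.

End EuclideanStep.

Lemma coprime_mod_pos (a b : Z) : 0 < a -> a <> 1 -> Z.gcd a b = 1 -> 0 < b mod a.
Proof.
  intros a_pos a_ne1 Hg.
  pose proof (Z.mod_pos_bound b a a_pos) as Hb.
  destruct (Z.eq_dec (b mod a) 0) as [E | E]; [|lia].
  pose proof (Z.gcd_mod b a ltac:(lia)) as Hgm.
  rewrite E, Z.gcd_0_l, Hg, Z.abs_eq in Hgm; lia.
Qed.

Theorem proposition3p10 (dj dk : Z) :
  1 < dj -> dj < dk -> Z.gcd dj dk = 1 ->
  let r := dk mod dj in
  forall e : Z * Z,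
    (Bez dk dj e /\ (exists v', Bez dj r v' /\ e = fmap dj dk v')
       /\ irreducible_Bez dk dj e)
    <->
    (exists v', Bez dj r v' /\ irreducible_Bez dj r v' /\ e = fmap dj dk v').
Proof.
  intros dj_gt1 dj_lt_dk Hg r e.
  assert (dk_eq : dk = dj * (dk / dj) + r) by (apply Z.div_mod; lia).
  assert (r_bounds : 1 <= r < dj).
  { pose proof (Z.mod_pos_bound dk dj ltac:(lia)).
    pose proof (coprime_mod_pos dj dk ltac:(lia) ltac:(lia) Hg); unfold r; lia. }
  assert (Q_ge0 : 0 <= dk / dj) by (apply Z.div_pos; lia).
  change (fmap dj dk) with (bezout_shift (dk / dj)).
  pose proof (Bez_shift _ _ _ _ dk_eq r_bounds Q_ge0) as Bez_f.
  pose proof (irreducible_Bez_shift _ _ _ _ dk_eq r_bounds Q_ge0) as irr_f.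
  split.
  - intros [_ [[v [Hv ->]] Hirr]].
    exists v; repeat split; [exact Hv | exact (proj1 (irr_f v Hv) Hirr)].
  - intros [v [Hv [Hirr ->]]].
    split; [exact (Bez_f v Hv)|].
    split; [exists v; split; [exact Hv | reflexivity]|].
    exact (proj2 (irr_f v Hv) Hirr).
Qed.
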